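(* Let $S$ be a $\Gamma$-semiring with zero having a left unity and a right unity, and let $n$ be a positive integer. Then there exists an inclusion preserving bijection between the set of all fuzzy ideals of $S$ and the set of all fuzzy ideals of the matrix $\Gamma_n$-semiring $S_n$.
   Context: A $\Gamma$-semiring: $S$ and $\Gamma$ are additive commutative semigroups with a map $S\times\Gamma\times S\to S$, $(a,\alpha,b)\mapsto a\alpha b$, such that $(a+b)\alpha c=a\alpha c+b\alpha c$, $a\alpha(b+c)=a\alpha b+a\alpha c$, $a(\alpha+\beta)b=a\alpha b+a\beta b$, $a\alpha(b\beta c)=(a\alpha b)\beta c$. With zero: $(S,+)$, $(\Gamma,+)$ are monoids, $0_S\alpha x=0_S=x\alpha0_S$, $x0_\Gamma y=0_S$. A left unity of $S$ is a finite family $e_i\in S,\delta_i\in\Gamma$ with $\sum_ie_i\delta_ia=a$ for all $a\in S$; a right unity is a finite family $\gamma_j\in\Gamma,f_j\in S$ with $\sum_ja\gamma_jf_j=a$ for all $a\in S$. $S_n$ (resp. $\Gamma_n$) is the set of $n\times n$ matrices with entries in $S$ (resp. $\Gamma$), with entrywise addition and, for $A=[a_{ij}],B=[b_{ij}]\in S_n$, $\Delta=[\delta_{ij}]\in\Gamma_n$, $(A\Delta B)_{ij}=\sum_{k,l}a_{ik}\delta_{kl}b_{lj}$; this makes $S_n$ a $\Gamma_n$-semiring with zero. A fuzzy ideal of a $\Gamma$-semiring $T$ is a map $\mu:T\to[0,1]$, not identically $0$, with $\mu(x+y)\ge\min[\mu(x),\mu(y)]$, $\mu(x\gamma y)\ge\mu(y)$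 and $\mu(x\gamma y)\ge\mu(x)$ for all $x,y\in T$ and all $\gamma$; by convention fuzzy ideals satisfy $\mu(0)=1$. Inclusion of fuzzy subsets is pointwise $\le$. *)

From mathcomp Require Import all_boot all_algebra.
From Stdlib Require Import Reals.

Set Implicit Arguments.
Unset Strict Implicit.
Unset Printing Implicit Defensive.

Record GammaSemiring := {
  gsS : Type;
  gsG : Type;
  gs_add : gsS -> gsS -> gsS;
  gs_zero : gsS;
  gs_gadd : gsG -> gsG -> gsG;
  gs_gzero : gsG;
  gs_mul : gsS -> gsG -> gsS -> gsS;
  gs_addA : forall a b c, gs_add a (gs_add b c) = gs_add (gs_add a b) c;
  gs_addC : forall a b, gs_add a b = gs_add b a;
  gs_add0 : forall a, gs_add gs_zero a = a;
  gs_gaddA : forall a b c, gs_gadd a (gs_gadd b c) = gs_gadd (gs_gadd a b) c;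
  gs_gaddC : forall a b, gs_gadd a b = gs_gadd b a;
  gs_gadd0 : forall a, gs_gadd gs_gzero a = a;
  gs_mulDl : forall a b g c,
      gs_mul (gs_add a b) g c = gs_add (gs_mul a g c) (gs_mul b g c);
  gs_mulDr : forall a g b c,
      gs_mul a g (gs_add b c) = gs_add (gs_mul a g b) (gs_mul a g c);
  gs_mulDm : forall a g h b,
      gs_mul a (gs_gadd g h) b = gs_add (gs_mul a g b) (gs_mul a h b);
  gs_mulA : forall a g b h c,
      gs_mul a g (gs_mul b h c) = gs_mul (gs_mul a g b) h c;
  gs_mul0l : forall g x, gs_mul gs_zero g x = gs_zero;
  gs_mul0r : forall x g, gs_mul x g gs_zero = gs_zero;
  gs_mul0m : forall x y, gs_mul x gs_gzero y = gs_zero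
}.

Definition gsum (T : GammaSemiring) (k : nat) (f : 'I_k -> gsS T) : gsS T :=
  \big[@gs_add T/gs_zero T]_(i < k) f i.

Definition has_left_unity (T : GammaSemiring) : Prop :=
  exists (k : nat) (e : 'I_k -> gsS T) (d : 'I_k -> gsG T),
    forall a, gsum (fun i => gs_mul (e i) (d i) a) = a.

Definition has_right_unity (T : GammaSemiring) : Prop :=
  exists (k : nat) (g : 'I_k -> gsG T) (f : 'I_k -> gsS T),
    forall a, gsum (fun j => gs_mul a (g j) (f j)) = a.

Definition mx_add (T : GammaSemiring) (n : nat) (A B : 'M[gsS T]_n)
  : 'M[gsS T]_n := \matrix_(i, j) gs_add (A i j) (B i j).

Definition mx_zero (T : GammaSemiring) (n : nat) : 'M[gsS T]_n :=
  \matrix_(i, j) gs_zero T.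

Definition mx_mul (T : GammaSemiring) (n : nat)
  (A : 'M[gsS T]_n) (D : 'M[gsG T]_n) (B : 'M[gsS T]_n) : 'M[gsS T]_n :=
  \matrix_(i, j) gsum (fun k : 'I_n => gsum (fun l : 'I_n =>
                          gs_mul (A i k) (D k l) (B l j))).

(* Values lie in [0,1], mu is not
   identically 0, mu(x+y) >= min, mu(x g y) >= mu y and >= mu x, and by the
   stated convention mu(0) = 1. *)
Definition fuzzy_ideal (X G : Type) (add : X -> X -> X) (zero : X)
  (mul : X -> G -> X -> X) (mu : X -> R) : Prop :=
  (forall x, (0 <= mu x <= 1)%R) /\
  (exists x, mu x <> 0%R) /\
  (forall x y, (Rmin (mu x) (mu y) <= mu (add x y))%R) /\
  (forall x g y, (mu y <= mu (mul x g y))%R) /\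
  (forall x g y, (mu x <= mu (mul x g y))%R) /\
  mu zero = 1%R.

Definition fuzzy_ideal_S (T : GammaSemiring) (mu : gsS T -> R) : Prop :=
  fuzzy_ideal (@gs_add T) (gs_zero T) (@gs_mul T) mu.

Definition fuzzy_ideal_Sn (T : GammaSemiring) (n : nat)
  (mu : 'M[gsS T]_n -> R) : Prop :=
  fuzzy_ideal (@mx_add T n) (mx_zero T n) (@mx_mul T n) mu.

Definition fuzzy_incl (X : Type) (mu nu : X -> R) : Prop :=
  forall x, (mu x <= nu x)%R.

(* The bijection sends mu to A |-> min_(i,j) mu (A i j); its inverse sends a
   fuzzy ideal nu of S_n to a |-> nu (a e_00), writing a e_ij for the matrix
   with the single nonzero entry a at (i, j).  With a left unity (e_t, d_t)
   and a right unity (g_s, f_s), every (B k l) e_ij is the sum over t, s of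
   (e_t e_ii) (d_t e_ik) B (g_s e_lj) (f_s e_jj), so nu B <= nu ((B k l) e_ij).
   Hence nu (a e_ij) = nu (a e_00) for all i, j, and since B is the sum of
   the (B i j) e_ij, nu B is the minimum of the nu ((B i j) e_00). *)
From HB Require Import structures.
From mathcomp Require Import all_boot all_algebra.
From Stdlib Require Import Reals Lra FunctionalExtensionality.

Set Implicit Arguments.
Unset Strict Implicit.
Unset Printing Implicit Defensive.

Lemma bigRmin_le k (g : 'I_k -> R) i : (\big[Rmin/1%R]_(j < k) g j <= g i)%R.
Proof.
elim: k g i => [|k IHk] g i; first by case: i.
rewrite big_ord_recl; case: (unliftP ord0 i) => [j ->|->].
- exact: Rle_trans (Rmin_r _ _) (IHk _ j).
- exact: Rmin_l.
Qed.

Lemma bigRmin_le1 k (g : 'I_k -> R) : (\big[Rmin/1%R]_(j < k) g j <= 1)%R.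
Proof.
elim: k g => [|k IHk] g; first by rewrite big_ord0; apply: Rle_refl.
by rewrite big_ord_recl; apply: Rle_trans (Rmin_r _ _) (IHk _).
Qed.

Lemma bigRmin_glb k (g : 'I_k -> R) r :
  (r <= 1)%R -> (forall i, r <= g i)%R -> (r <= \big[Rmin/1%R]_(j < k) g j)%R.
Proof.
move=> r_le1 r_le_g; apply: (big_ind (fun x => r <= x)%R) => // x y.
exact: Rmin_glb.
Qed.

Section FuzzyIdeal.

Variables (X G : Type) (add : X -> X -> X) (zero : X) (mul : X -> G -> X -> X).
Variable mu : X -> R.
Hypothesis mu_ideal : fuzzy_ideal add zero mul mu.

Lemma fuzzy_ideal_le1 x : (mu x <= 1)%R.
Proof. by case: mu_ideal => /(_ x) []. Qed.

Lemma fuzzy_ideal_sum_ge k (f : 'I_k -> X) r :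
  (r <= 1)%R -> (forall i, r <= mu (f i))%R ->
  (r <= mu (\big[add/zero]_(i < k) f i))%R.
Proof.
case: mu_ideal => _ [_ [mu_add [_ [_ mu0]]]] r_le1 r_le_f.
apply: (big_ind (fun x => r <= mu x)%R) => [|x y rx ry|//]; first by rewrite mu0.
exact: Rle_trans (Rmin_glb _ _ _ rx ry) (mu_add x y).
Qed.

Lemma fuzzy_ideal_sandwich k1 k2 (x : 'I_k1 -> X) (g : 'I_k1 -> G) (y : X)
    (h : 'I_k2 -> G) (z : 'I_k2 -> X) :
  (mu y <= mu (\big[add/zero]_(t < k1) \big[add/zero]_(s < k2)
                 mul (mul (x t) (g t) y) (h s) (z s)))%R.
Proof.
case: mu_ideal => _ [_ [_ [mu_mulr [mu_mull _]]]].
apply: fuzzy_ideal_sum_ge => [|t]; first exact: fuzzy_ideal_le1.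
apply: fuzzy_ideal_sum_ge => [|s]; first exact: fuzzy_ideal_le1.
exact: Rle_trans (mu_mulr _ _ _) (mu_mull _ _ _).
Qed.

End FuzzyIdeal.

HB.instance Definition _ (T : GammaSemiring) :=
  Monoid.isComLaw.Build (gsS T) (gs_zero T) (@gs_add T)
    (@gs_addA T) (@gs_addC T) (@gs_add0 T).

Section MatrixGammaSemiring.

Variables (T : GammaSemiring) (n : nat).

Local Notation S := (gsS T).
Local Notation Gm := (gsG T).
Local Notation "0" := (gs_zero T).

Definition sdelta_mx (i j : 'I_n) (a : S) : 'M[S]_n :=
  \matrix_(p, q) if (p == i) && (q == j) then a else 0.

Definition gdelta_mx (i j : 'I_n) (g : Gm) : 'M[Gm]_n :=
  \matrix_(p, q) if (p == i) && (q == j) then g else gs_gzero T.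

Lemma mx_sum_entry k (M : 'I_k -> 'M[S]_n) p q :
  (\big[@mx_add T n/mx_zero T n]_(t < k) M t) p q = gsum (fun t => M t p q).
Proof.
apply: (big_morph (fun A : 'M[S]_n => A p q)) => [A B|]; by rewrite mxE.
Qed.

Lemma mx_mul_gdelta (A B : 'M[S]_n) k l g p q :
  mx_mul A (gdelta_mx k l g) B p q = gs_mul (A p k) g (B l q).
Proof.
rewrite mxE /gsum (bigD1 k) //= (bigD1 l) //= !mxE !eqxx /=.
rewrite [X in gs_add _ X]big1 => [|k' /negbTE nek]; last first.
  by rewrite big1 // => l' _; rewrite mxE nek gs_mul0m.
rewrite big1 => [|l' /negbTE nel]; last by rewrite mxE eqxx nel gs_mul0m.
by rewrite !Monoid.simpm.
Qed.

Lemma mx_sum_sdelta (A : 'M[S]_n) :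
  A = \big[@mx_add T n/mx_zero T n]_(i < n) \big[@mx_add T n/mx_zero T n]_(j < n)
        sdelta_mx i j (A i j).
Proof.
apply/matrixP => p q; rewrite mx_sum_entry /gsum (bigD1 p) //= mx_sum_entry.
rewrite /gsum (bigD1 q) //= !mxE !eqxx /=.
rewrite [X in gs_add _ X]big1 => [|i /negbTE nep]; last first.
  by rewrite mx_sum_entry /gsum big1 // => j _; rewrite mxE eq_sym nep.
rewrite big1 => [|j /negbTE neq]; last by rewrite mxE eqxx eq_sym neq.
by rewrite !Monoid.simpm.
Qed.

Lemma sdelta_mx_add i j a b :
  sdelta_mx i j (gs_add a b) = mx_add (sdelta_mx i j a) (sdelta_mx i j b).
Proof. by apply/matrixP => p q; rewrite !mxE; case: ifP; rewrite ?gs_add0. Qed.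

Lemma sdelta_mx0 i j : sdelta_mx i j 0 = mx_zero T n.
Proof. by apply/matrixP => p q; rewrite !mxE if_same. Qed.

Lemma sdelta_mx_mul i a g b :
  sdelta_mx i i (gs_mul a g b) =
  mx_mul (sdelta_mx i i a) (gdelta_mx i i g) (sdelta_mx i i b).
Proof.
apply/matrixP => p q; rewrite mx_mul_gdelta !mxE eqxx.
by case: (p == i); case: (q == i); rewrite ?gs_mul0l ?gs_mul0r.
Qed.

Lemma sdelta_sandwich k1 (e : 'I_k1 -> S) (d : 'I_k1 -> Gm)
    k2 (g : 'I_k2 -> Gm) (f : 'I_k2 -> S) :
  (forall a, gsum (fun t => gs_mul (e t) (d t) a) = a) ->
  (forall a, gsum (fun s => gs_mul a (g s) (f s)) = a) ->
  forall (B : 'M[S]_n) i j k l,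
  sdelta_mx i j (B k l) =
  \big[@mx_add T n/mx_zero T n]_(t < k1) \big[@mx_add T n/mx_zero T n]_(s < k2)
    mx_mul (mx_mul (sdelta_mx i i (e t)) (gdelta_mx i k (d t)) B)
           (gdelta_mx l j (g s)) (sdelta_mx j j (f s)).
Proof.
move=> left_unity right_unity B i j k l; apply/matrixP => p q.
rewrite mx_sum_entry /gsum.
under eq_bigr => t _ do rewrite mx_sum_entry /gsum.
under eq_bigr => t _ do under eq_bigr => s _ do rewrite !mx_mul_gdelta !mxE !eqxx andbT.
rewrite mxE; case: (p == i); case: (q == j) => /=.
- rewrite -[LHS]left_unity; apply: eq_bigr => t _; exact: esym (right_unity _).
- by rewrite big1 // => t _; rewrite big1 // => s _; rewrite gs_mul0r.
- by rewrite big1 // => t _; rewrite big1 // => s _; rewrite !gs_mul0l.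
- by rewrite big1 // => t _; rewrite big1 // => s _; rewrite !gs_mul0l.
Qed.

Definition mx_fuzzy (mu : S -> R) (A : 'M[S]_n) : R :=
  \big[Rmin/1%R]_(i < n) \big[Rmin/1%R]_(j < n) mu (A i j).

Lemma mx_fuzzy_le mu (A : 'M[S]_n) i j : (mx_fuzzy mu A <= mu (A i j))%R.
Proof. exact: Rle_trans (bigRmin_le _ i) (bigRmin_le _ j). Qed.

Lemma mx_fuzzy_le1 mu (A : 'M[S]_n) : (mx_fuzzy mu A <= 1)%R.
Proof. exact: bigRmin_le1. Qed.

Lemma mx_fuzzy_glb mu (A : 'M[S]_n) r :
  (r <= 1)%R -> (forall i j, r <= mu (A i j))%R -> (r <= mx_fuzzy mu A)%R.
Proof. by move=> r_le1 r_le_mu; apply: bigRmin_glb => // i; apply: bigRmin_glb. Qed.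

Lemma mx_fuzzy_incl (mu nu : S -> R) :
  fuzzy_incl mu nu -> fuzzy_incl (mx_fuzzy mu) (mx_fuzzy nu).
Proof.
move=> mu_le_nu A; apply: mx_fuzzy_glb => [|i j]; first exact: mx_fuzzy_le1.
exact: Rle_trans (mx_fuzzy_le mu A i j) (mu_le_nu _).
Qed.

Section FuzzyIdealOfS.

Variable mu : S -> R.
Hypothesis mu_ideal : fuzzy_ideal_S mu.

Lemma mx_fuzzy_mul_ge (A B : 'M[S]_n) (D : 'M[Gm]_n) r : (r <= 1)%R ->
  (forall i k l j, r <= mu (gs_mul (A i k) (D k l) (B l j)))%R ->
  (r <= mx_fuzzy mu (mx_mul A D B))%R.
Proof.
move=> r_le1 r_le_mu; apply: mx_fuzzy_glb => // i j; rewrite mxE.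
apply: (fuzzy_ideal_sum_ge mu_ideal) => // k.
exact: (fuzzy_ideal_sum_ge mu_ideal).
Qed.

Lemma mx_fuzzy_ideal : fuzzy_ideal_Sn (mx_fuzzy mu).
Proof.
have [mu01 [_ [mu_add [mu_mulr [mu_mull mu0]]]]] := mu_ideal.
have mx_fuzzy0 : mx_fuzzy mu (mx_zero T n) = 1%R.
  apply: Rle_antisym; first exact: mx_fuzzy_le1.
  by apply: mx_fuzzy_glb => [|i j]; rewrite ?mxE ?mu0; apply: Rle_refl.
split; [|split; [|split; [|split; [|split]]]] => //.
- move=> A; split; last exact: mx_fuzzy_le1.
  by apply: mx_fuzzy_glb => [|i j]; [lra | case: (mu01 (A i j))].
- by exists (mx_zero T n); rewrite mx_fuzzy0; lra.
- move=> A B; apply: mx_fuzzy_glb => [|i j].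
    exact: Rle_trans (Rmin_l _ _) (mx_fuzzy_le1 _ _).
  rewrite mxE; apply: Rle_trans (mu_add _ _).
  by apply: Rmin_glb; [apply: Rle_trans (Rmin_l _ _) _ | apply: Rle_trans (Rmin_r _ _) _];
    apply: mx_fuzzy_le.
- move=> A D B; apply: mx_fuzzy_mul_ge => [|i k l j]; first exact: mx_fuzzy_le1.
  exact: Rle_trans (mx_fuzzy_le _ _ l j) (mu_mulr _ _ _).
- move=> A D B; apply: mx_fuzzy_mul_ge => [|i k l j]; first exact: mx_fuzzy_le1.
  exact: Rle_trans (mx_fuzzy_le _ _ i k) (mu_mull _ _ _).
Qed.

Lemma mx_fuzzy_sdelta i a : mx_fuzzy mu (sdelta_mx i i a) = mu a.
Proof.
have [mu01 [_ [_ [_ [_ mu0]]]]] := mu_ideal.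
apply: Rle_antisym.
  by have := mx_fuzzy_le mu (sdelta_mx i i a) i i; rewrite mxE !eqxx.
apply: mx_fuzzy_glb => [|p q]; first by case: (mu01 a).
rewrite mxE; case: ifP => _; first exact: Rle_refl.
by rewrite mu0; case: (mu01 a).
Qed.

End FuzzyIdealOfS.

Section FuzzyIdealOfSn.

Variable nu : 'M[S]_n -> R.
Hypothesis nu_ideal : fuzzy_ideal_Sn nu.

Lemma sdelta_restr_ideal i : fuzzy_ideal_S (fun a => nu (sdelta_mx i i a)).
Proof.
have [nu01 [_ [nu_add [nu_mulr [nu_mull nu0]]]]] := nu_ideal.
split; [|split; [|split; [|split; [|split]]]] => //.
- by exists 0; rewrite sdelta_mx0 nu0; lra.
- by move=> a b; rewrite sdelta_mx_add.
- by move=> a g b; rewrite sdelta_mx_mul.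
- by move=> a g b; rewrite sdelta_mx_mul.
- by rewrite sdelta_mx0.
Qed.

Hypotheses (left_unity : has_left_unity T) (right_unity : has_right_unity T).

Lemma fuzzy_idealSn_sdelta (B : 'M[S]_n) i j k l :
  (nu B <= nu (sdelta_mx i j (B k l)))%R.
Proof.
have [k1 [e [d unity_e]]] := left_unity; have [k2 [g [f unity_f]]] := right_unity.
by rewrite (sdelta_sandwich unity_e unity_f); apply: fuzzy_ideal_sandwich.
Qed.

Lemma mx_fuzzy_sdelta_restr i : mx_fuzzy (fun a => nu (sdelta_mx i i a)) = nu.
Proof.
apply: functional_extensionality => A; apply: Rle_antisym.
- rewrite {2}(mx_sum_sdelta A).
  apply: (fuzzy_ideal_sum_ge nu_ideal) => [|p]; first exact: mx_fuzzy_le1.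
  apply: (fuzzy_ideal_sum_ge nu_ideal) => [|q]; first exact: mx_fuzzy_le1.
  apply: Rle_trans (mx_fuzzy_le _ _ p q) _.
  by have := fuzzy_idealSn_sdelta (sdelta_mx i i (A p q)) p q i i; rewrite mxE !eqxx.
- apply: mx_fuzzy_glb => [|p q]; last exact: fuzzy_idealSn_sdelta.
  by case: nu_ideal => /(_ A) [].
Qed.

End FuzzyIdealOfSn.

End MatrixGammaSemiring.

Theorem theorem3p12 (T : GammaSemiring) (n : nat) (hn : (0 < n)%N)
  (hl : has_left_unity T) (hr : has_right_unity T) :
  exists F : (gsS T -> R) -> ('M[gsS T]_n -> R),
    (forall mu, fuzzy_ideal_S mu -> fuzzy_ideal_Sn (F mu)) /\
    (forall mu nu, fuzzy_ideal_S mu -> fuzzy_ideal_S nu ->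
        F mu = F nu -> mu = nu) /\
    (forall nu, fuzzy_ideal_Sn nu ->
        exists mu, fuzzy_ideal_S mu /\ F mu = nu) /\
    (forall mu nu, fuzzy_ideal_S mu -> fuzzy_ideal_S nu ->
        (fuzzy_incl mu nu <-> fuzzy_incl (F mu) (F nu))).
Proof.
pose i0 : 'I_n := Ordinal hn.
exists (@mx_fuzzy T n); split; [exact: mx_fuzzy_ideal | split; [|split]].
- move=> mu nu mu_ideal nu_ideal F_eq; apply: functional_extensionality => a.
  by rewrite -(mx_fuzzy_sdelta mu_ideal i0) -(mx_fuzzy_sdelta nu_ideal i0) F_eq.
- move=> nu nu_ideal; exists (fun a => nu (sdelta_mx i0 i0 a)).
  by split; [exact: sdelta_restr_ideal | exact: mx_fuzzy_sdelta_restr].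
- move=> mu nu mu_ideal nu_ideal; split; first exact: mx_fuzzy_incl.
  move=> F_incl a.
  by rewrite -(mx_fuzzy_sdelta mu_ideal i0) -(mx_fuzzy_sdelta nu_ideal i0).
Qed.
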